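(* Let $s\ge3$ and let $S$ be a sequence over an alphabet of $n$ symbols, written as a concatenation of $m$ blocks, containing no alternation of length $s+2$. Let $2\le\hat m<m$ and partition the blocks of $S$ into $\hat m$ consecutive intervals $S_1S_2\cdots S_{\hat m}$, where $S_q$ consists of $m_q\ge1$ blocks ($\sum_q m_q=m$). For each $q$ let $\check n_q$ be the number of symbols occurring in $S_q$ and in no other interval, and let $\hat n=n-\sum_q\check n_q$. Then \[ |S|\le \sum_{q=1}^{\hat m}\lambda_s(\check n_q,m_q)+2\lambda_{s-1}(\hat n,m)+\lambda_{s-2}\big(\lambda_s(\hat n,\hat m)-2\hat n,\,m\big). \] Consequently $\lambda_s(n,m)$ is at most the maximum of the right-hand side over all nonnegative integers $\hat n,\check n_1,\dots,\check n_{\hat m}$ summing to $n$.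
   Context: For $s\ge1$, a sequence contains an alternation of length $s+2$ if there are distinct symbols $a\ne b$ and indices $i_1<\dots<i_{s+2}$ whose entries are alternately $a,b,a,b,\dots$. A block is a sequence of pairwise distinct symbols. $\lambda_s(n,m)$ is the maximum length of a sequence using at most $n$ distinct symbols that contains no alternation of length $s+2$ and can be written as a concatenation of at most $m$ blocks; by convention $\lambda_s(0,m)=0$. *)

From Stdlib Require Import ClassicalEpsilon.
From mathcomp Require Import all_boot.
Set Implicit Arguments. Unset Strict Implicit. Unset Printing Implicit Defensive.

Definition alt (T : eqType) (a b : T) (k : nat) : seq T :=
  mkseq (fun i => if odd i then b else a) k.

Definition has_alt (T : eqType) (k : nat) (S : seq T) : Prop :=
  exists a b : T, a != b /\ subseq (alt a b k) S.

Definition block_decomp (T : eqType) (S : seq T) (bs : seq (seq T)) : Prop :=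
  all uniq bs /\ flatten bs = S.

(* Symbols are taken in nat (any alphabet can be relabelled into nat). *)
Definition realizable (s n m L : nat) : Prop :=
  exists S : seq nat, size S = L /\ size (undup S) <= n /\ ~ has_alt (s.+2) S /\
    exists bs : seq (seq nat), size bs <= m /\ block_decomp S bs.

Definition pbool (P : Prop) : bool :=
  if excluded_middle_informative P then true else false.

(* Every such sequence has
   length <= n*m (each block has at most n symbols), so the maximum over
   L <= n*m is the maximum over all L; L = 0 is always realizable. *)
Definition lambda (s n m : nat) : nat :=
  \max_(L < (n * m).+1 | pbool (realizable s n m L)) L.

Definition intervals (T : eqType) (bs : seq (seq T)) (ms : seq nat) : seq (seq T) :=
  map flatten (reshape ms bs).

Definition only_in (T : eqType) (Ss : seq (seq T)) (q : nat) (x : T) : bool :=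
  all (fun r => (r == q) || (x \notin nth [::] Ss r)) (iota 0 (size Ss)).

Definition checkn (T : eqType) (Ss : seq (seq T)) (q : nat) : nat :=
  count (only_in Ss q) (undup (nth [::] Ss q)).

Definition rhs (s m mhat : nat) (ms : seq nat) (nhat : nat) (cn : seq nat) : nat :=
  \sum_(q < mhat) lambda s (nth 0 cn q) (nth 0 ms q)
  + 2 * lambda s.-1 nhat m
  + lambda (s - 2) (lambda s nhat mhat - 2 * nhat) m.

From Stdlib Require Import ClassicalEpsilon.
From mathcomp Require Import all_boot zify.
Set Implicit Arguments. Unset Strict Implicit. Unset Printing Implicit Defensive.

(* Let S be split into intervals S_1 ... S_mhat of consecutive blocks, and
   label every occurrence of a symbol x in S_q by the pair (x, q).  Since the
   labels are nondecreasing along S, any alternation of length >= 3 between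
   labelled symbols lies inside a single interval.  The labelled occurrences
   (x, q) are split into four classes:
   - local: x occurs in no other interval.  The local occurrences of S_q form
     a sequence on checkn_q symbols with m_q blocks: lambda_s(checkn_q, m_q).
   - first (resp. last): x is not local and occurs in no earlier (resp.
     later) interval.  Such x are "global", at most nhat of them, and an
     alternation inside S_q extends by a later (resp. earlier) occurrence of
     its last (resp. first) symbol, so these sequences avoid alternations of
     length s+1: 2 lambda_{s-1}(nhat, m).
   - middle: all other occurrences.  As labelled symbols they avoid
     alternations of length s (extend on both sides), and there are at most
     lambda_s(nhat, mhat) - 2 nhat distinct labelled symbols: compare with
     the sequence of distinct non-local symbols of each interval (mhat
     blocks), padded by a pair c ... c for each missing global symbol. *)

Lemma altS (T : eqType) (a b : T) k : alt a b k.+1 = a :: alt b a k.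
Proof.
rewrite /alt /mkseq /= -[1]/(1 + 0) iotaDl -map_comp; congr (_ :: _).
by apply: eq_map => i /=; case: (odd i).
Qed.

Lemma alt_rcons (T : eqType) (a b : T) k :
  alt a b k.+1 = rcons (alt a b k) (if odd k then b else a).
Proof. by rewrite /alt mkseqS. Qed.

Lemma alt_map (T T' : eqType) (f : T -> T') a b k :
  map f (alt a b k) = alt (f a) (f b) k.
Proof. by rewrite /alt /mkseq -map_comp; apply: eq_map => i /=; case: odd. Qed.

Lemma mem_alt (T : eqType) (a b x : T) k :
  x \in alt a b k -> (x == a) || (x == b).
Proof.
elim: k a b => [|k IH] a b //=; rewrite altS inE => /orP[->//|/IH].
by rewrite orbC.
Qed.

Lemma noalt_subseq (T : eqType) k (X Y : seq T) :
  subseq X Y -> ~ has_alt k Y -> ~ has_alt k X.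
Proof.
move=> sXY nY [a [b [ab sX]]]; apply: nY; exists a, b; split=> //.
exact: subseq_trans sX sXY.
Qed.

Lemma count_subseq (T : eqType) (p : pred T) (s1 s2 : seq T) :
  subseq s1 s2 -> count p s1 <= count p s2.
Proof.
move=> h; rewrite -!size_filter; apply: size_subseq.
by rewrite subseq_filter filter_all (subseq_trans (filter_subseq _ _) h).
Qed.

Lemma block_size (T : eqType) (S : seq T) (bs : seq (seq T)) :
  block_decomp S bs -> size S <= size bs * size (undup S).
Proof.
case=> ub <-; elim: bs ub => //= b bs IH /andP[ub ubs].
rewrite size_cat mulSn leq_add //.
  by apply: uniq_leq_size => // x xb; rewrite mem_undup mem_cat xb.
apply: leq_trans (IH ubs) _; rewrite leq_mul2l; apply/orP; right.
apply: uniq_leq_size; first exact: undup_uniq.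
by move=> x; rewrite !mem_undup mem_cat => ->; rewrite orbT.
Qed.

Lemma block_decomp_filter (T : eqType) (X : seq T) (bs : seq (seq T)) (P : pred T) :
  block_decomp X bs -> block_decomp (filter P X) (map (filter P) bs).
Proof.
case=> ub fX; split; last by rewrite -fX filter_flatten.
by apply/allP => b' /mapP[b bin ->]; apply: filter_uniq; move/allP: ub; apply.
Qed.

Lemma block_decomp_map (T T' : eqType) (f : T -> T') (X : seq T) (bs : seq (seq T)) :
  (forall b, b \in bs -> {in b &, injective f}) ->
  block_decomp X bs -> block_decomp (map f X) (map (map f) bs).
Proof.
move=> finj [ub fX]; split; last by rewrite -fX map_flatten.
apply/allP => b' /mapP[b bin ->]; rewrite map_inj_in_uniq; last exact: finj.
by move/allP: ub; apply.
Qed.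

Lemma block_decomp_pad (T : eqType) (S : seq T) (bs : seq (seq T)) m :
  block_decomp S bs -> size bs <= m ->
  exists bs', size bs' = m /\ block_decomp S bs'.
Proof.
case=> ub fS hm; exists (bs ++ nseq (m - size bs) [::]).
split; first by rewrite size_cat size_nseq; lia.
split; first by rewrite all_cat ub /=; elim: (m - size bs).
by rewrite flatten_cat fS; elim: (m - size bs) => [|j IH]; rewrite ?cats0.
Qed.

Lemma pboolE (P : Prop) : pbool P = true <-> P.
Proof. by rewrite /pbool; case: excluded_middle_informative. Qed.

Lemma realizable0 s n m : realizable s n m 0.
Proof.
exists [::]; do 2!split=> //; split; last by exists [::].
by move=> [a [b [_]]]; rewrite !altS.
Qed.

Lemma realizable_le s n m L : realizable s n m L -> L <= lambda s n m.
Proof.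
move=> hr; have hL : L < (n * m).+1.
  case: hr => S [<- [hn [_ [bs [hm hd]]]]]; rewrite ltnS.
  by apply: leq_trans (block_size hd) _; rewrite mulnC leq_mul.
by apply: (leq_trans _ (leq_bigmax_cond (Ordinal hL) _)) => //; apply/pboolE.
Qed.

Lemma lambda_realizable s n m : realizable s n m (lambda s n m).
Proof.
rewrite /lambda (bigmax_eq_arg ord0); last exact/pboolE/realizable0.
by case: arg_maxnP => [|i /pboolE]; first exact/pboolE/realizable0.
Qed.

Lemma realizable_of (T : eqType) s n m (X : seq T) (bs : seq (seq T)) :
  block_decomp X bs -> size bs <= m -> size (undup X) <= n ->
  ~ has_alt s.+2 X -> realizable s n m (size X).
Proof.
case: X => [|x0 X'] hd hm hn na; first exact: realizable0.
set X := x0 :: X' in hd hn na *.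
pose f x := index x (undup X); pose g := nth x0 (undup X).
have gf x : x \in X -> g (f x) = x by move=> xX; rewrite /g /f nth_index // mem_undup.
have finj : {in X &, injective f} by move=> x y xX yX /(congr1 g); rewrite !gf.
have fXK : map g (map f X) = X by rewrite -map_comp map_id_in.
exists (map f X); split; first by rewrite size_map.
split.
  apply: leq_trans hn; rewrite -(size_map f (undup X)).
  apply: uniq_leq_size; first exact: undup_uniq.
  by move=> y; rewrite mem_undup => /mapP[x xX ->]; rewrite map_f ?mem_undup.
split.
  move=> [a [b [ab h]]]; apply: na; exists (g a), (g b); split.
    have /mapP[x xX ax] : a \in map f X.
      by apply: (mem_subseq h); rewrite altS inE eqxx.
    have /mapP[y yX bY] : b \in map f X.
      by apply: (mem_subseq h); rewrite !altS !inE eqxx orbT.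
    by rewrite ax bY !gf //; apply: contra ab => /eqP xy; rewrite ax bY xy.
  by rewrite -alt_map -fXK map_subseq.
exists (map (map f) bs); split; first by rewrite size_map.
apply: block_decomp_map (hd) => b bin x y xb yb; apply: finj; case: hd => _ <-;
  by apply/flattenP; exists b.
Qed.

(* Wrapping a sequence in two copies c ... c of a new symbol creates no
   alternation of length s+2 when s >= 3: c occurs only twice, and an
   alternation avoiding c is one of the original sequence. *)
Lemma noalt_wrap (S : seq nat) c s : 3 <= s -> c \notin S ->
  ~ has_alt s.+2 S -> ~ has_alt s.+2 (c :: S ++ [:: c]).
Proof.
move=> hs cS na [a [b [ab h]]].
have c0 : count (pred1 c) S = 0 by apply/count_memPn.
have [k ek] : exists k, s = k.+3 by exists (s - 3); lia.
subst s.
have alt5 : alt a b k.+4.+1 = [:: a, b, a, b, a & alt b a k] by rewrite !altS.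
have cnt : count (pred1 c) (c :: S ++ [:: c]) = 2 by rewrite /= count_cat /= eqxx c0.
case: (eqVneq a c) => [ac|anc].
  have := count_subseq (pred1 c) h; rewrite cnt alt5 /= ac eqxx.
  by rewrite eq_sym -ac (negbTE ab); lia.
case: (eqVneq b c) => [bc|bnc].
  move: h; rewrite alt5 bc /= (negbTE anc) => /(count_subseq (pred1 c)).
  by rewrite /= count_cat /= eqxx (negbTE anc) c0; lia.
apply: na; exists a, b; split=> //.
have -> : S = filter (predC1 c) (c :: S ++ [:: c]).
  rewrite /= eqxx /= filter_cat /= eqxx cats0; apply/esym/all_filterP.
  by apply/allP => x xS /=; apply: contraNneq cS => <-.
rewrite subseq_filter h andbT.
by apply/allP => x /mem_alt /orP[] /eqP ->; rewrite /= ?anc ?bnc.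
Qed.

(* With at least two blocks, c ... c is absorbed by putting c at the front of
   the first block and at the end of the last one. *)
Lemma block_decomp_wrap (T : eqType) (S : seq T) (bs : seq (seq T)) c :
  c \notin S -> 2 <= size bs -> block_decomp S bs ->
  exists bs', size bs' = size bs /\ block_decomp (c :: S ++ [:: c]) bs'.
Proof.
move=> cS; case: bs => [|b0 [|b1 rest]] //= _ [/and3P[u0 u1 ur] fS].
rewrite /= in fS.
have hl := lastI b1 rest.
have flat1 : b1 ++ flatten rest = flatten (belast b1 rest) ++ last b1 rest.
  by rewrite -flatten_rcons -hl.
have cb1 : c \notin last b1 rest.
  by apply: contra cS => cb; rewrite -fS flat1 !mem_cat cb !orbT.
exists ((c :: b0) :: rcons (belast b1 rest) (rcons (last b1 rest) c)).
split; first by rewrite /= size_rcons size_belast.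
split; last by rewrite /= flatten_rcons -cats1 -fS flat1 !catA.
rewrite /= u0 andbT; apply/andP; split.
  by apply: contra cS => cb; rewrite -fS mem_cat cb.
have : all uniq (b1 :: rest) by rewrite /= u1.
by rewrite hl !all_rcons rcons_uniq cb1 => /andP[-> ->].
Qed.

Lemma realizable_fresh s n m L : 3 <= s -> 2 <= m ->
  realizable s n m L -> realizable s n.+1 m L.+2.
Proof.
move=> hs hm [S [hL [hn [na [bs0 [hbm hd0]]]]]].
have [bs [hbs hd]] := block_decomp_pad hd0 hbm.
pose c := (\max_(x <- S) x).+1.
have cS : c \notin S.
  by apply/negP => /(@leq_bigmax_seq _ _ predT (fun x => x)) /(_ isT); rewrite ltnn.
have two_blocks : 2 <= size bs by rewrite hbs.
have [bs' [hbs' hd']] := block_decomp_wrap cS two_blocks hd.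
exists (c :: S ++ [:: c]); split; first by rewrite /= size_cat addn1 hL.
split.
  apply: leq_trans (_ : size (c :: undup S) <= _); last by [].
  apply: uniq_leq_size; first exact: undup_uniq.
  move=> x; rewrite mem_undup !inE mem_cat inE mem_undup.
  by case: (x == c); rewrite //= orbF.
split; first exact: noalt_wrap.
by exists bs'; rewrite hbs' hbs.
Qed.

Lemma realizable_freshk s n m L k : 3 <= s -> 2 <= m ->
  realizable s n m L -> realizable s (n + k) m (L + 2 * k).
Proof.
move=> hs hm hr; elim: k => [|k IH]; first by rewrite muln0 !addn0.
by have := realizable_fresh hs hm IH; congr realizable; lia.
Qed.

Definition label_seq (T : Type) (x : seq T) (q : nat) : seq (T * nat) :=
  [seq (y, q) | y <- x].

Lemma map_fst_label (T : Type) (x : seq T) q : map fst (label_seq x q) = x.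
Proof. by rewrite /label_seq -map_comp map_id. Qed.

Section Labels.
Variables (T : eqType) (A : seq (seq T)).
Local Notation k := (size A).
Local Notation Aq := (nth [::] A).

Definition labelled_from j n := flatten [seq label_seq (Aq r) r | r <- iota j n].
Definition labelled := labelled_from 0 k.

Lemma mem_labelled_from j n x q :
  ((x, q) \in labelled_from j n) = (j <= q < j + n) && (x \in Aq q).
Proof.
apply/flatten_mapP/idP => [[r rin /mapP[y yin [-> ->]]]|/andP[qin xin]].
  by rewrite -mem_iota rin.
by exists q; rewrite ?mem_iota // map_f.
Qed.

Lemma mem_labelled x q : ((x, q) \in labelled) = (q < k) && (x \in Aq q).
Proof. by rewrite /labelled mem_labelled_from. Qed.

Lemma interval_index x q : x \in Aq q -> q < k.
Proof. by case: (ltnP q k) => // h; rewrite nth_default. Qed.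

Lemma map_fst_labelled : map fst labelled = flatten A.
Proof.
rewrite /labelled /labelled_from map_flatten -map_comp.
rewrite (eq_map (g := Aq)); last by move=> r /=; rewrite map_fst_label.
by rewrite -/(mkseq _ _) mkseq_nth.
Qed.

Lemma size_labelled : size labelled = size (flatten A).
Proof. by rewrite -map_fst_labelled size_map. Qed.

Lemma labels_sorted j n :
  pairwise (fun p p' : T * nat => p.2 <= p'.2) (labelled_from j n).
Proof.
elim: n j => [|n IH] j //=; rewrite /labelled_from /= pairwise_cat.
rewrite -/(labelled_from _ _) IH andbT; apply/andP; split.
  apply/allrelP => p [x q] /mapP[y _ ->]; rewrite mem_labelled_from /=.
  by case/andP=> /andP[/ltnW].
rewrite /label_seq pairwise_map; elim: (Aq j) => //= y ys ->.
by rewrite andbT; apply/allP => ? _ /=.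
Qed.

Lemma filter_label_from j n q :
  filter (fun p => p.2 == q) (labelled_from j n) =
  if j <= q < j + n then label_seq (Aq q) q else [::].
Proof.
elim: n j => [|n IH] j.
  by rewrite /labelled_from /= addn0; case: leqP => //= h; rewrite ltnNge h.
rewrite /labelled_from /= filter_cat -/(labelled_from _ _) IH.
have -> : filter (fun p => p.2 == q) (label_seq (Aq j) j) =
          if j == q then label_seq (Aq j) j else [::].
  by rewrite /label_seq filter_map /preim /=; case: eqP => _;
    rewrite ?filter_predT ?filter_pred0.
case: (eqVneq j q) => [<-|jq]; first by rewrite ltnn /= cats0 leqnn addnS ltnS leq_addr.
by rewrite /= ltn_neqAle jq /= addnS addSn.
Qed.

Lemma filter_label q : q < k -> filter (fun p => p.2 == q) labelled = label_seq (Aq q) q.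
Proof. by move=> qk; rewrite /labelled filter_label_from qk. Qed.

Lemma alt_one_interval a b qa qb j : 3 <= j ->
  subseq (alt (a, qa) (b, qb) j) labelled -> qa = qb /\ subseq (alt a b j) (Aq qa).
Proof.
move=> hj h; have [i ej] : exists i, j = i.+3 by exists (j - 3); lia.
subst j.
have := subseq_pairwise h (labels_sorted 0 k).
rewrite !altS /= => /and4P[/and3P[h1 _ _] /andP[h2 _] _ _].
have eq : qa = qb by apply/eqP; rewrite eqn_leq h1 h2.
subst qb; split=> //.
have qk : qa < k.
  have : (a, qa) \in labelled by apply: (mem_subseq h); rewrite altS inE eqxx.
  by rewrite mem_labelled => /andP[].
have h' : subseq (label_seq (alt a b i.+3) qa) (filter (fun p => p.2 == qa) labelled).
  rewrite subseq_filter /label_seq alt_map h andbT.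
  by apply/allP => p /mem_alt /orP[] /eqP ->.
by move: (map_subseq fst h'); rewrite filter_label // !map_fst_label !altS.
Qed.

Lemma interval_split q : q < k ->
  flatten A = flatten (take q A) ++ Aq q ++ flatten (drop q.+1 A).
Proof. by move=> qk; rewrite -{1}(cat_take_drop q A) flatten_cat (drop_nth [::]). Qed.

Lemma interval_subseq q : subseq (Aq q) (flatten A).
Proof.
case: (ltnP q k) => qk; last by rewrite nth_default ?sub0seq.
have e : Aq q = [::] ++ (Aq q ++ [::]) by rewrite cats0.
rewrite (interval_split qk) {1}e.
by rewrite cat_subseq ?sub0seq // cat_subseq ?sub0seq.
Qed.

Lemma mem_before z r q : r < q -> z \in Aq r -> z \in flatten (take q A).
Proof.
move=> rq zr; apply/flattenP; exists (nth [::] (take q A) r); last by rewrite nth_take.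
by apply: mem_nth; rewrite size_take; have := interval_index zr; case: ifP => _ //; lia.
Qed.

Lemma mem_after z r q : q < r -> z \in Aq r -> z \in flatten (drop q.+1 A).
Proof.
move=> qr zr; apply/flattenP; exists (nth [::] (drop q.+1 A) (r - q.+1)).
  have rk := interval_index zr; apply: mem_nth; rewrite size_drop.
  by apply: ltn_sub2r (rk); apply: leq_ltn_trans qr rk.
by rewrite nth_drop subnKC.
Qed.

Lemma extend_after w z q r : q < r -> subseq w (Aq q) -> z \in Aq r ->
  subseq (rcons w z) (flatten A).
Proof.
move=> qr hw zr; rewrite (interval_split (ltn_trans qr (interval_index zr))) -cats1.
rewrite -[_ ++ [:: z]]cat0s cat_subseq ?sub0seq // cat_subseq // sub1seq.
exact: mem_after zr.
Qed.

Lemma extend_before w z q r : r < q -> q < k -> subseq w (Aq q) -> z \in Aq r ->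
  subseq (z :: w) (flatten A).
Proof.
move=> rq qk hw zr; rewrite (interval_split qk) -cat1s -[w]cats0.
by rewrite cat_subseq ?cat_subseq ?sub0seq ?sub1seq //; apply: mem_before zr.
Qed.

Lemma extend_both w z1 z2 q r1 r2 : r1 < q -> q < r2 -> subseq w (Aq q) ->
  z1 \in Aq r1 -> z2 \in Aq r2 -> subseq (z1 :: rcons w z2) (flatten A).
Proof.
move=> rq qr hw zr1 zr2.
rewrite (interval_split (ltn_trans qr (interval_index zr2))) -cat1s -cats1.
rewrite cat_subseq ?cat_subseq ?sub1seq //; first exact: mem_before zr1.
exact: mem_after zr2.
Qed.

End Labels.

Lemma count_split (T : Type) (a b : pred T) (s : seq T) :
  count a s = count (predI a b) s + count (predI a (predC b)) s.
Proof. by elim: s => //= x s ->; case: (a x); case: (b x) => /=; lia. Qed.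

Section Classes.
Variables (T : eqType) (A : seq (seq T)).
Local Notation k := (size A).
Local Notation Aq := (nth [::] A).
Local Notation labelled := (labelled A).

Definition local_occ (p : T * nat) := only_in A p.2 p.1.
Definition no_earlier (p : T * nat) := all (fun r => p.1 \notin Aq r) (iota 0 p.2).
Definition no_later (p : T * nat) :=
  all (fun r => p.1 \notin Aq r) (iota p.2.+1 (k - p.2.+1)).
Definition first_occ p := ~~ local_occ p && no_earlier p.
Definition last_occ p := ~~ local_occ p && no_later p.
Definition middle_occ p := [&& ~~ local_occ p, ~~ no_earlier p & ~~ no_later p].

Lemma nonlocal_elsewhere x q :
  ~~ local_occ (x, q) -> exists r, [/\ r < k, r != q & x \in Aq r].
Proof.
rewrite /local_occ /only_in => /allPn[r rin]; rewrite negb_or negbK /=.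
by case/andP=> rq xr; exists r; split=> //; move: rin; rewrite mem_iota.
Qed.

Lemma earlier_occ x q : ~~ no_earlier (x, q) -> exists2 r, r < q & x \in Aq r.
Proof. by case/allPn => r; rewrite mem_iota negbK => /andP[_ rq] xr; exists r. Qed.

Lemma later_occ x q : ~~ no_later (x, q) -> exists2 r, q < r & x \in Aq r.
Proof. by case/allPn => r; rewrite mem_iota negbK => /andP[rq _] xr; exists r. Qed.

Lemma no_earlier_le x q r : no_earlier (x, q) -> x \in Aq r -> q <= r.
Proof.
move=> /allP h xr; rewrite leqNgt; apply/negP => rq.
by have := h r; rewrite mem_iota rq /= xr => /(_ isT).
Qed.

Lemma no_later_ge x q r : no_later (x, q) -> x \in Aq r -> r <= q.
Proof.
move=> /allP h xr; rewrite leqNgt; apply/negP => qr.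
have e : r < q.+1 + (k - q.+1) by have := interval_index xr; lia.
by have := h r; rewrite mem_iota qr e xr => /(_ isT).
Qed.

Lemma not_first_and_last p :
  p \in labelled -> ~~ local_occ p -> ~~ (no_earlier p && no_later p).
Proof.
case: p => x q _ /nonlocal_elsewhere[r [_ rq xr]]; apply/negP => /andP[hF hL].
by have := no_earlier_le hF xr; have := no_later_ge hL xr; move: rq => /eqP; lia.
Qed.

Lemma count_classes (s : seq (T * nat)) : {subset s <= labelled} ->
  size s = count local_occ s + count first_occ s + count last_occ s
           + count middle_occ s.
Proof.
move=> sub.
have h0 := count_predC local_occ s.
have h1 := count_split (predC local_occ) no_earlier s.
have h2 := count_split (predI (predC local_occ) (predC no_earlier)) no_later s.
have e1 : count (predI (predC local_occ) no_earlier) s = count first_occ s.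
  exact: eq_count.
have e3 : count (predI (predI (predC local_occ) (predC no_earlier)) (predC no_later)) s
          = count middle_occ s.
  by apply: eq_count => p; rewrite /= /middle_occ andbA.
have e2 : count (predI (predI (predC local_occ) (predC no_earlier)) no_later) s
          = count last_occ s.
  apply: eq_in_count => p /sub pin /=; rewrite /last_occ.
  case: (boolP (local_occ p)) => //= nl; case: (boolP (no_later p)); rewrite ?andbT ?andbF //.
  by have := not_first_and_last pin nl; case: (no_earlier p) => //= /negPf ->.
lia.
Qed.

Definition label_unique (P : pred (T * nat)) :=
  forall x q q', (x, q) \in labelled -> (x, q') \in labelled ->
    P (x, q) -> P (x, q') -> q = q'.

Lemma first_occ_unique : label_unique first_occ.
Proof.
move=> x q q'; rewrite !mem_labelled => /andP[_ h1] /andP[_ h2] /andP[_ f1] /andP[_ f2].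
by apply/eqP; rewrite eqn_leq (no_earlier_le f1 h2) (no_earlier_le f2 h1).
Qed.

Lemma last_occ_unique : label_unique last_occ.
Proof.
move=> x q q'; rewrite !mem_labelled => /andP[_ h1] /andP[_ h2] /andP[_ f1] /andP[_ f2].
by apply/eqP; rewrite eqn_leq (no_later_ge f1 h2) (no_later_ge f2 h1).
Qed.

Definition class_label (P : pred (T * nat)) x :=
  find (fun r => P (x, r) && ((x, r) \in labelled)) (iota 0 k).

Lemma class_labelP (P : pred (T * nat)) x q : label_unique P ->
  (x, q) \in labelled -> P (x, q) -> q = class_label P x.
Proof.
move=> U xin Pq.
have qk : q < k by move: xin; rewrite mem_labelled => /andP[].
have hh : has (fun r => P (x, r) && ((x, r) \in labelled)) (iota 0 k).
  by apply/hasP; exists q; rewrite ?mem_iota ?Pq ?xin.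
have := nth_find 0 hh; rewrite -/(class_label P x).
have := hh; rewrite has_find size_iota => fk.
by rewrite nth_iota // add0n => /andP[P2 in2]; apply: U P2.
Qed.

Lemma class_alt_one_interval (P : pred (T * nat)) a b j : label_unique P ->
  3 <= j -> subseq (alt a b j) (map fst (filter P labelled)) ->
  exists q, [/\ subseq (alt a b j) (Aq q), (a, q) \in filter P labelled
              & (b, q) \in filter P labelled].
Proof.
move=> U hj /subseqP[msk hsz]; rewrite -map_mask => halt.
set w := mask msk _ in halt.
have wsub : {subset w <= filter P labelled} by move=> p /mem_mask.
have ew : w = alt (a, class_label P a) (b, class_label P b) j.
  rewrite -(alt_map (fun y => (y, class_label P y))) halt -map_comp map_id_in //.
  move=> p /wsub; rewrite mem_filter; case: p => x q /andP[Px xin] /=.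
  by rewrite -(class_labelP U xin Px).
have hw : subseq w labelled.
  exact: subseq_trans (mask_subseq _ _) (filter_subseq _ _).
rewrite ew in hw; have [eq hs] := alt_one_interval hj hw.
exists (class_label P a); split => //.
  by apply: wsub; rewrite ew -(ltn_predK hj) altS inE eqxx.
rewrite eq; apply: wsub; rewrite ew; have -> : j = j.-2.+2 by lia.
by rewrite !altS !inE eqxx orbT.
Qed.

Section Alternations.
Variable s : nat.
Hypothesis hs : 3 <= s.
Hypothesis na : ~ has_alt s.+2 (flatten A).

(* Appending the later occurrence of its last symbol to an alternation of
   first occurrences gives an alternation of S. *)
Lemma first_occ_noalt : ~ has_alt s.+1 (map fst (filter first_occ labelled)).
Proof.
move=> [a [b [ab h]]].
have [q [hq ha hb]] := class_alt_one_interval first_occ_unique (leqW hs) h.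
pose z := if odd s.+1 then b else a.
have : (z, q) \in filter first_occ labelled by rewrite /z; case: odd.
rewrite mem_filter => /andP[/andP[nl fz] _].
have [r [_ rq zr]] := nonlocal_elsewhere nl.
have qr : q < r by rewrite ltn_neqAle eq_sym rq (no_earlier_le fz zr).
apply: na; exists a, b; split=> //; rewrite alt_rcons; exact: extend_after qr hq zr.
Qed.

Lemma last_occ_noalt : ~ has_alt s.+1 (map fst (filter last_occ labelled)).
Proof.
move=> [a [b [ab h]]].
have [q [hq _]] := class_alt_one_interval last_occ_unique (leqW hs) h.
rewrite mem_filter => /andP[/andP[nl lb] bin].
have qk : q < k by move: bin; rewrite mem_labelled => /andP[].
have [r [_ rq br]] := nonlocal_elsewhere nl.
have rlt : r < q by rewrite ltn_neqAle rq (no_later_ge lb br).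
apply: na; exists b, a; split; first by rewrite eq_sym.
by rewrite altS; apply: extend_before rlt qk hq br.
Qed.

(* Middle occurrences, as labelled symbols, extend on both sides. *)
Lemma middle_occ_noalt : ~ has_alt s (filter middle_occ labelled).
Proof.
move=> [[a qa] [[b qb] [ab h]]].
have [eq hq] := alt_one_interval hs (subseq_trans h (filter_subseq _ _)); subst qb.
have es : s = s.-2.+2 by lia.
have hb : (b, qa) \in filter middle_occ labelled.
  by apply: (mem_subseq h); rewrite es !altS !inE eqxx orbT.
pose z := if odd s then b else a.
have hz : (z, qa) \in filter middle_occ labelled.
  by rewrite /z; case: odd => //; apply: (mem_subseq h); rewrite es altS inE eqxx.
move: hb hz; rewrite !mem_filter => /andP[/and3P[_ fb _] _] /andP[/and3P[_ _ lz] _].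
have [r1 r1q br1] := earlier_occ fb.
have [r2 qr2 zr2] := later_occ lz.
apply: na; exists b, a; split; first by apply: contra ab => /eqP ->.
by rewrite altS alt_rcons; apply: extend_both r1q qr2 hq br1 zr2.
Qed.

End Alternations.
End Classes.

Lemma subseq_flatten_map (I U : eqType) (f h : I -> seq U) (s : seq I) :
  (forall i, subseq (f i) (h i)) -> subseq (flatten (map f s)) (flatten (map h s)).
Proof. by move=> H; elim: s => //= i s IH; apply: cat_subseq. Qed.

Section Global.
Variables (T : eqType) (A : seq (seq T)).
Local Notation k := (size A).
Local Notation Aq := (nth [::] A).
Local Notation labelled := (labelled A).

Definition symbols := undup (flatten A).
Definition local_to q x := (x \in Aq q) && only_in A q x.
Definition global x := ~~ has (local_to ^~ x) (iota 0 k).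
Definition nglobal := count global symbols.

Lemma mem_flatten_labelled x :
  (x \in flatten A) = has (fun q => (x, q) \in labelled) (iota 0 k).
Proof.
rewrite -map_fst_labelled; apply/mapP/hasP => [[[y q] pin /= ->]|[q _ pin]].
  by exists q => //; move: pin; rewrite mem_labelled mem_iota => /andP[-> _].
by exists (x, q).
Qed.

Lemma local_to_unique q r x : local_to q x -> local_to r x -> q = r.
Proof.
move=> /andP[xq _] /andP[_ /allP h]; have := h q.
by rewrite mem_iota /= (interval_index xq) xq orbF => /(_ isT) /eqP.
Qed.

Lemma checkn_local q : checkn A q = count (local_to q) symbols.
Proof.
rewrite /checkn -!size_filter; apply: perm_size; apply: uniq_perm.
- by apply: filter_uniq; apply: undup_uniq.
- by apply: filter_uniq; apply: undup_uniq.
move=> x; rewrite !mem_filter !mem_undup /local_to.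
case: (boolP (x \in Aq q)) => xq; last by rewrite andbF.
rewrite andbT; case: (only_in A q x) => //=; apply/esym/flattenP.
by exists (Aq q) => //; apply: mem_nth; apply: interval_index xq.
Qed.

Lemma checkn_sum_prefix j : j <= k ->
  sumn [seq checkn A q | q <- iota 0 j]
  + count (fun x => ~~ has (local_to ^~ x) (iota 0 j)) symbols = size symbols.
Proof.
elim: j => [|j IH] hj; first by rewrite /= add0n count_predT.
have -> : iota 0 j.+1 = iota 0 j ++ [:: j] by rewrite -addn1 iotaD.
rewrite map_cat sumn_cat /= addn0 -addnA -[RHS](IH (ltnW hj)); congr (_ + _).
rewrite checkn_local (count_split (fun x => ~~ has (local_to ^~ x) (iota 0 j)) (local_to j)).
congr (_ + _).
  apply: eq_count => x /=; case: (boolP (local_to j x)) => hx /=; last by rewrite andbF.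
  rewrite andbT; apply/esym/hasPn => q; rewrite mem_iota => /andP[_ qj].
  by apply/negP => /local_to_unique /(_ hx) e; move: qj; rewrite e ltnn.
apply: eq_count => x /=; rewrite has_cat /= orbF negb_or.
by case: (local_to j x); rewrite ?andbF ?andbT.
Qed.

(* Every symbol is local to at most one interval or global. *)
Lemma checkn_sum : sumn [seq checkn A q | q <- iota 0 k] + nglobal = size symbols.
Proof. exact: checkn_sum_prefix. Qed.

Lemma nonlocal_global x q : (x, q) \in labelled -> ~~ local_occ A (x, q) -> global x.
Proof.
rewrite mem_labelled => /andP[qk xq] nl; apply/hasPn => r _.
apply/negP => /andP[xr /allP h]; have := h q.
rewrite mem_iota qk /= xq orbF => /(_ isT) /eqP e; subst r.
by move: nl; rewrite /local_occ /= /only_in; apply/negP/negPn/allP.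
Qed.

Lemma global_nonlocal x q : (x, q) \in labelled -> global x -> ~~ local_occ A (x, q).
Proof.
rewrite mem_labelled => /andP[qk xq] /hasPn /(_ q); rewrite mem_iota qk /local_to xq.
by move/(_ isT).
Qed.

Lemma global_first x : x \in symbols -> global x ->
  exists q, (x, q) \in labelled /\ first_occ A (x, q).
Proof.
rewrite mem_undup mem_flatten_labelled => /hasP[q0 _ p0] gx.
have [q pin qmin] := ex_minnP (ex_intro (fun q => (x, q) \in labelled) q0 p0).
exists q; split => //; rewrite /first_occ global_nonlocal //=.
apply/allP => r; rewrite mem_iota => /andP[_ rq]; apply/negP => xr.
have : (x, r) \in labelled by rewrite mem_labelled xr (interval_index xr).
by move/qmin; rewrite leqNgt rq.
Qed.

Lemma global_last x : x \in symbols -> global x ->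
  exists q, (x, q) \in labelled /\ last_occ A (x, q).
Proof.
rewrite mem_undup mem_flatten_labelled => /hasP[q0 _ p0] gx.
have ub q : (x, q) \in labelled -> q <= k.
  by rewrite mem_labelled => /andP[/ltnW].
have [q pin qmax] := ex_maxnP (ex_intro (fun q => (x, q) \in labelled) q0 p0) ub.
exists q; split => //; rewrite /last_occ global_nonlocal //=.
apply/allP => r; rewrite mem_iota => /andP[qr _]; apply/negP => xr.
have : (x, r) \in labelled by rewrite mem_labelled xr (interval_index xr).
by move/qmax; rewrite leqNgt qr.
Qed.

Lemma nonlocal_symbols (P : pred (T * nat)) : (forall p, P p -> ~~ local_occ A p) ->
  size (undup (map fst (filter P labelled))) <= nglobal.
Proof.
move=> hP; rewrite /nglobal -size_filter; apply: uniq_leq_size; first exact: undup_uniq.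
move=> x; rewrite mem_undup => /mapP[[y q] hin ->] /=.
have /andP[Pp pin] : P (y, q) && ((y, q) \in labelled) by rewrite -mem_filter.
rewrite mem_filter (nonlocal_global pin (hP _ Pp)) /symbols mem_undup.
by rewrite -map_fst_labelled; apply/mapP; exists (y, q).
Qed.

Definition nonlocal_labels := undup (filter (predC (local_occ A)) labelled).

Lemma nonlocal_labels_sub : {subset nonlocal_labels <= labelled}.
Proof. by move=> p; rewrite mem_undup mem_filter => /andP[]. Qed.

Lemma global_le_count (P : pred (T * nat)) :
  (forall p, P p -> ~~ local_occ A p) ->
  (forall x, x \in symbols -> global x -> exists q, (x, q) \in labelled /\ P (x, q)) ->
  nglobal <= count P nonlocal_labels.
Proof.
move=> hP hex; rewrite /nglobal -!size_filter -(size_map fst (filter P _)).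
apply: uniq_leq_size; first by apply: filter_uniq; apply: undup_uniq.
move=> x; rewrite mem_filter => /andP[gx xU].
have [q [pin Pq]] := hex x xU gx.
by apply/mapP; exists (x, q); rewrite // mem_filter Pq mem_undup mem_filter pin /= (hP _ Pq).
Qed.

Lemma count_middle_nonlocal :
  count (middle_occ A) nonlocal_labels = size (undup (filter (middle_occ A) labelled)).
Proof.
rewrite /nonlocal_labels -size_filter filter_undup -filter_predI.
congr (size (undup _)); apply: eq_filter => p /=.
by rewrite /middle_occ; case: (local_occ A p); rewrite /= ?andbT.
Qed.

Lemma count_local_nonlocal : count (local_occ A) nonlocal_labels = 0.
Proof.
apply/eqP; rewrite -leqn0 leqNgt -has_count; apply/hasPn => p.
by rewrite mem_undup mem_filter => /andP[].
Qed.

(* Each global symbol has a first and a last non-local label, distinct from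
   the middle ones. *)
Lemma nonlocal_labels_size :
  2 * nglobal + size (undup (filter (middle_occ A) labelled)) <= size nonlocal_labels.
Proof.
rewrite (count_classes nonlocal_labels_sub) count_local_nonlocal -count_middle_nonlocal.
have hF : nglobal <= count (first_occ A) nonlocal_labels.
  apply: global_le_count; first by move=> p /andP[].
  exact: global_first.
have hL : nglobal <= count (last_occ A) nonlocal_labels.
  apply: global_le_count; first by move=> p /andP[].
  exact: global_last.
lia.
Qed.

Definition contracted :=
  flatten [seq undup (filter (fun x => ~~ only_in A q x) (Aq q)) | q <- iota 0 k].

Lemma nonlocal_labels_le_contracted : size nonlocal_labels <= size contracted.
Proof.
pose lab := flatten [seq label_seq (undup (filter (fun x => ~~ only_in A q x) (Aq q))) q
                    | q <- iota 0 k].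
have -> : size contracted = size lab.
  rewrite /contracted /lab !size_flatten /shape -!map_comp.
  by congr sumn; apply: eq_map => q /=; rewrite size_map.
apply: uniq_leq_size; first exact: undup_uniq.
move=> [x q]; rewrite mem_undup mem_filter /= => /andP[nl pin].
move: (pin); rewrite mem_labelled => /andP[qk xq].
apply/flatten_mapP; exists q; first by rewrite mem_iota.
by apply: map_f; rewrite mem_undup mem_filter xq andbT.
Qed.

Lemma contracted_subseq : subseq contracted (flatten A).
Proof.
have -> : flatten A = flatten [seq Aq q | q <- iota 0 k] by rewrite -/(mkseq _ _) mkseq_nth.
apply: subseq_flatten_map => q.
exact: subseq_trans (undup_subseq _) (filter_subseq _ _).
Qed.

Lemma contracted_symbols : size (undup contracted) <= nglobal.
Proof.
rewrite /nglobal -size_filter; apply: uniq_leq_size; first exact: undup_uniq.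
move=> x; rewrite mem_undup => /flatten_mapP[q]; rewrite mem_iota /= => qk.
rewrite mem_undup mem_filter => /andP[nl xq].
have pin : (x, q) \in labelled by rewrite mem_labelled xq qk.
rewrite mem_filter (nonlocal_global pin nl) /symbols mem_undup -map_fst_labelled.
by apply/mapP; exists (x, q).
Qed.

Lemma contracted_realizable s : ~ has_alt s.+2 (flatten A) ->
  realizable s nglobal k (size contracted).
Proof.
move=> na; apply: (@realizable_of _ _ _ _ _
  [seq undup (filter (fun x => ~~ only_in A q x) (Aq q)) | q <- iota 0 k]).
- by split => //; apply/allP => b /mapP[q _ ->]; apply: undup_uniq.
- by rewrite size_map size_iota.
- exact: contracted_symbols.
- exact: noalt_subseq contracted_subseq na.
Qed.

End Global.

Lemma flatten_flatten (U : Type) (L : seq (seq (seq U))) :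
  flatten (flatten L) = flatten (map flatten L).
Proof. by elim: L => //= l L IH; rewrite flatten_cat IH. Qed.

Lemma sumn_iota_big (f : nat -> nat) n : sumn [seq f q | q <- iota 0 n] = \sum_(q < n) f q.
Proof. by rewrite sumnE big_map -(subn0 n) -/(index_iota 0 n) big_mkord subn0. Qed.

Section IntervalBound.
Variable T : eqType.
Variables (s n m mhat : nat) (S : seq T) (bs : seq (seq T)) (ms : seq nat).
Hypotheses (hs : 3 <= s) (hn : size (undup S) <= n) (hm : size bs = m)
  (hbd : block_decomp S bs) (na : ~ has_alt s.+2 S) (hmh : 2 <= mhat)
  (hms : size ms = mhat) (hsum : sumn ms = m).

Let G := reshape ms bs.
Let A := intervals bs ms.
Local Notation Aq := (nth [::] A).
Local Notation Gq := (nth [::] G).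
Let cn := [seq checkn A q | q <- iota 0 mhat].
Let nhat := n - sumn cn.

Lemma size_intervals : size A = mhat.
Proof. by rewrite /A /intervals size_map size_reshape. Qed.

Lemma flatten_groups : flatten G = bs.
Proof. by rewrite /G reshapeKr // hsum hm. Qed.

Lemma flatten_intervals : flatten A = S.
Proof. by rewrite /A /intervals -flatten_flatten flatten_groups; case: hbd. Qed.

Lemma noalt_intervals : ~ has_alt s.+2 (flatten A).
Proof. by rewrite flatten_intervals. Qed.

Lemma size_group q : q < mhat -> size (Gq q) = nth 0 ms q.
Proof.
move=> qm; have := reshapeKl (sh := ms) (s := bs); rewrite hsum hm => /(_ (leqnn _)) e.
by have := congr1 (nth 0 ^~ q) e; rewrite /shape (nth_map [::]) ?size_reshape ?hms.
Qed.

Lemma intervalE q : Aq q = flatten (Gq q).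
Proof.
case: (ltnP q mhat) => qm; first by rewrite /A /intervals (nth_map [::]) // size_reshape hms.
by rewrite !nth_default // ?size_map size_reshape hms.
Qed.

Lemma group_block q b : b \in Gq q -> b \in bs.
Proof.
move=> bin; rewrite -flatten_groups; apply/flattenP; exists (Gq q) => //; apply: mem_nth.
by case: (ltnP q (size G)) => // h; move: bin; rewrite nth_default.
Qed.

Definition labelled_blocks :=
  flatten [seq [seq label_seq b q | b <- Gq q] | q <- iota 0 mhat].

Lemma labelled_block_decomp : block_decomp (labelled A) labelled_blocks.
Proof.
split.
  apply/allP => b' /flatten_mapP[q _ /mapP[b bin ->]].
  rewrite /label_seq map_inj_uniq; last by move=> x y [].
  by have [/allP ub _] := hbd; apply: ub; apply: group_block bin.
rewrite /labelled_blocks flatten_flatten /labelled /labelled_from size_intervals.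
rewrite -map_comp; congr flatten.
by apply: eq_map => q /=; rewrite /label_seq -map_flatten -intervalE.
Qed.

Lemma size_labelled_blocks : size labelled_blocks = m.
Proof.
rewrite /labelled_blocks size_flatten /shape -map_comp -hsum -(mkseq_nth 0 ms) hms.
congr sumn; apply/eq_in_map => q; rewrite mem_iota => /andP[_ qm] /=.
by rewrite size_map size_group.
Qed.

Lemma fst_injective_in_blocks (P : pred (T * nat)) b' :
  b' \in map (filter P) labelled_blocks -> {in b' &, injective fst}.
Proof.
case/mapP=> b0 /flatten_mapP[q _ /mapP[b _ ->]] -> [x1 q1] [x2 q2].
by rewrite !mem_filter => /andP[_ /mapP[y1 _ [_ ->]]] /andP[_ /mapP[y2 _ [_ ->]]] /= ->.
Qed.

(* The local symbols and the global ones are distinct symbols of S, so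
   there are at most nhat global symbols. *)
Lemma nglobal_le : sumn cn + nglobal A <= n.
Proof. by rewrite /cn -size_intervals checkn_sum /symbols flatten_intervals. Qed.

Lemma nhatE : nhat + sumn cn = n.
Proof. by have := nglobal_le; rewrite /nhat; lia. Qed.

Lemma local_bound q : q < mhat ->
  count (local_occ A) (label_seq (Aq q) q) <= lambda s (checkn A q) (nth 0 ms q).
Proof.
move=> qm; rewrite /label_seq count_map -size_filter; apply: realizable_le.
apply: (@realizable_of _ _ _ _ _ (map (filter (only_in A q)) (Gq q))).
- apply: block_decomp_filter; split; last by rewrite intervalE.
  by apply/allP => b /group_block; have [/allP ub _] := hbd; apply: ub.
- by rewrite size_map size_group.
- by rewrite -filter_undup size_filter.
- exact: noalt_subseq (subseq_trans (filter_subseq _ _) (interval_subseq A q))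
    noalt_intervals.
Qed.

Lemma endpoint_bound (P : pred (T * nat)) :
  (forall p, P p -> ~~ local_occ A p) ->
  ~ has_alt s.+1 (map fst (filter P (labelled A))) ->
  count P (labelled A) <= lambda s.-1 nhat m.
Proof.
move=> hP noalt; rewrite -size_filter -(size_map fst); apply: realizable_le.
apply: (@realizable_of _ _ _ _ _ (map (map fst) (map (filter P) labelled_blocks))).
- apply: block_decomp_map; first by move=> b' /fst_injective_in_blocks.
  exact: block_decomp_filter labelled_block_decomp.
- by rewrite !size_map size_labelled_blocks.
- by apply: leq_trans (nonlocal_symbols hP) _; have := nglobal_le; rewrite /nhat; lia.
- by rewrite (_ : s.-1.+2 = s.+1) //; lia.
Qed.

(* At most lambda_s(nhat, mhat) - 2 nhat distinct middle labels: pad the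
   contracted sequence with nhat - nglobal fresh symbols. *)
Lemma middle_labels_bound :
  size (undup (filter (middle_occ A) (labelled A))) <= lambda s nhat mhat - 2 * nhat.
Proof.
have hsize := nonlocal_labels_size A.
have hcontr := nonlocal_labels_le_contracted A.
have hreal := contracted_realizable noalt_intervals; rewrite size_intervals in hreal.
have := realizable_le (realizable_freshk (nhat - nglobal A) hs hmh hreal).
have hle := nglobal_le; have -> : nglobal A + (nhat - nglobal A) = nhat by rewrite /nhat; lia.
rewrite /nhat in hle *; lia.
Qed.

Lemma middle_bound :
  count (middle_occ A) (labelled A) <= lambda (s - 2) (lambda s nhat mhat - 2 * nhat) m.
Proof.
rewrite -size_filter; apply: realizable_le.
apply: (@realizable_of _ _ _ _ _ (map (filter (middle_occ A)) labelled_blocks)).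
- exact: block_decomp_filter labelled_block_decomp.
- by rewrite size_map size_labelled_blocks.
- exact: middle_labels_bound.
- by rewrite (_ : (s - 2).+2 = s); [apply: middle_occ_noalt noalt_intervals | lia].
Qed.

Lemma interval_decomposition_bound : size S <= rhs s m mhat ms nhat cn.
Proof.
rewrite -flatten_intervals -size_labelled (@count_classes _ A (labelled A)) // /rhs.
have hlocal : count (local_occ A) (labelled A)
              <= \sum_(q < mhat) lambda s (nth 0 cn q) (nth 0 ms q).
  rewrite /labelled /labelled_from count_flatten -map_comp size_intervals.
  rewrite (sumn_iota_big (fun q => count (local_occ A) (label_seq (Aq q) q))).
  apply: leq_sum => [[q qm]] _ /=.
  by rewrite /cn (nth_map 0) ?size_iota // nth_iota // add0n; apply: local_bound.
have hfirst : count (first_occ A) (labelled A) <= lambda s.-1 nhat m.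
  by apply: endpoint_bound; [move=> p /andP[] | apply: first_occ_noalt noalt_intervals].
have hlast : count (last_occ A) (labelled A) <= lambda s.-1 nhat m.
  by apply: endpoint_bound; [move=> p /andP[] | apply: last_occ_noalt noalt_intervals].
by have := middle_bound; lia.
Qed.

End IntervalBound.

Theorem mainTheorem5 :
  (forall (T : eqType) (s n m mhat : nat) (S : seq T) (bs : seq (seq T)) (ms : seq nat),
     3 <= s ->
     size (undup S) <= n ->
     size bs = m ->
     block_decomp S bs ->
     ~ has_alt (s.+2) S ->
     2 <= mhat -> mhat < m ->
     size ms = mhat -> all (fun mq => 0 < mq) ms -> sumn ms = m ->
     let Ss := intervals bs ms in
     let cn := [seq checkn Ss q | q <- iota 0 mhat] in
     let nhat := n - sumn cn in
     size S <= rhs s m mhat ms nhat cn)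
  /\
  (forall (s n m mhat : nat) (ms : seq nat),
     3 <= s ->
     2 <= mhat -> mhat < m ->
     size ms = mhat -> all (fun mq => 0 < mq) ms -> sumn ms = m ->
     exists (nhat : nat) (cn : seq nat),
       size cn = mhat /\ nhat + sumn cn = n /\
       lambda s n m <= rhs s m mhat ms nhat cn).
Proof.
split=> [T s n m mhat S bs ms hs hn hm hbd na hmh _ hms _ hsum /=|].
  exact: interval_decomposition_bound.
move=> s n m mhat ms hs hmh _ hms _ hsum.
(* Apply the bound to a sequence of length lambda_s(n,m), padded to m blocks. *)
have [S [<- [hn [na [bs0 [hbs0 hbd0]]]]]] := lambda_realizable s n m.
have [bs [hbs hbd]] := block_decomp_pad hbd0 hbs0.
set cn := [seq checkn (intervals bs ms) q | q <- iota 0 mhat].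
exists (n - sumn cn), cn; split; first by rewrite size_map size_iota.
split; first exact: nhatE hs hn hbs hbd hmh hms hsum.
exact: interval_decomposition_bound.
Qed.
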